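(* If $\mathcal C_1$ and $\mathcal C_2$ are row-bounded classes of matrices, then the classes $\mathcal C_1\cup\mathcal C_2$ and $\mathcal C_1\cap\mathcal C_2$ are row-bounded as well.
   Context: All matrices are binary; rows numbered top to bottom, columns left to right; $(i,j)$ is the entry in row $i$, column $j$; $(a,b]=\{a+1,\dots,b\}$. A pattern $P\in\{0,1\}^{k\times\ell}$ is an interval minor of $M\in\{0,1\}^{m\times n}$ if there are integers $0=r_0<\dots<r_k=m$ and $0=c_0<\dots<c_\ell=n$ such that for each 1-entry $(i,j)$ of $P$ the submatrix of $M$ on rows $(r_{i-1},r_i]$ and columns $(c_{j-1},c_j]$ contains a 1-entry. A class of matrices is a set $\mathcal C$ of binary matrices closed under interval minors (if $M\in\mathcal C$ and $P$ is an interval minor of $M$ then $P\in\mathcal C$). $M\in\mathcal C$ is critical for $\mathcal C$ if changing any single 0-entry of $M$ into a 1-entry yields a matrix not in $\mathcal C$. A horizontal 0-run is a maximal set of consecutive 0-entries within one row; the complexity of a row is the number of such runs. The row-complexity of $\mathcal C$ is the supremum over all matrices critical for $\mathcal C$ of the maximum complexity of one of their rows; $\mathcal C$ is row-bounded if it is finite. *)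

From mathcomp Require Import all_boot.
Set Implicit Arguments. Unset Strict Implicit. Unset Printing Implicit Defensive.

(* A binary matrix with [rows] rows and [cols] columns; rows/columns are
   0-indexed here (row i of the paper is row i-1 here). *)
Record bmat := BMat {
  rows : nat;
  cols : nat;
  ent : {ffun 'I_rows * 'I_cols -> bool}
}.

(* Entry accessor on natural-number indices (false outside the matrix). *)
Definition entry (M : bmat) (a b : nat) : bool :=
  match @insub nat (fun x => x < rows M) _ a, @insub nat (fun x => x < cols M) _ b with
  | Some i, Some j => ent M (i, j)
  | _, _ => false
  end.

Definition partition_seq (r : nat -> nat) (k m : nat) : Prop :=
  r 0 = 0 /\ (forall i, i < k -> r i < r i.+1) /\ r k = m.

(* With 0-indexing, the block of pattern entry
   (i,j) consists of rows a with r i <= a < r (i+1) and columns b with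
   c j <= b < c (j+1) (i.e. rows (r_i, r_{i+1}] in the paper's 1-indexing). *)
Definition interval_minor (P M : bmat) : Prop :=
  exists r c : nat -> nat,
    partition_seq r (rows P) (rows M) /\ partition_seq c (cols P) (cols M) /\
    forall i j, i < rows P -> j < cols P -> entry P i j ->
      exists a b, [/\ r i <= a < r i.+1, c j <= b < c j.+1 & entry M a b].

Definition mclass := bmat -> Prop.

Definition is_class (C : mclass) : Prop :=
  forall M P, C M -> interval_minor P M -> C P.

Definition set_one (M : bmat) (i : 'I_(rows M)) (j : 'I_(cols M)) : bmat :=
  @BMat (rows M) (cols M) [ffun p => (p == (i, j)) || ent M p].

Definition critical (C : mclass) (M : bmat) : Prop :=
  C M /\ forall (i : 'I_(rows M)) (j : 'I_(cols M)),
    ent M (i, j) = false -> ~ C (set_one i j).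

(* Complexity of row i: number of maximal horizontal runs of 0-entries,
   counted by their first entries (a 0-entry at column 0 or preceded by a 1). *)
Definition row_complexity (M : bmat) (i : nat) : nat :=
  \sum_(j < cols M)
     (~~ entry M i j && ((nat_of_ord j == 0) || entry M i (nat_of_ord j).-1) : nat).

Definition row_bounded (C : mclass) : Prop :=
  exists B : nat, forall M, critical C M ->
    forall i, i < rows M -> row_complexity M i <= B.

Definition class_union (C1 C2 : mclass) : mclass := fun M => C1 M \/ C2 M.
Definition class_inter (C1 C2 : mclass) : mclass := fun M => C1 M /\ C2 M.

From Stdlib Require Import Classical.
From mathcomp Require Import all_boot.

Set Implicit Arguments. Unset Strict Implicit. Unset Printing Implicit Defensive.

(* For the union, a critical matrix of C1 ∪ C2 that lies in C_k is already
   critical for C_k.  For the intersection, extend a critical matrix M of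
   C1 ∩ C2 by 1-entries to critical matrices M1 of C1 and M2 of C2.  Classes
   are closed under deleting 1-entries, so a 0-entry of M that is 1 in both
   M1 and M2 could be turned into a 1 without leaving C1 ∩ C2; hence every
   0-entry of M is a 0-entry of M1 or of M2.  Since M has fewer 1-entries,
   every 0-run of a row of M then starts where a 0-run of the same row of M1
   or of M2 starts, and the row complexity of M is at most the sum. *)

Definition run_start (M : bmat) (i j : nat) : bool :=
  ~~ entry M i j && ((j == 0) || entry M i j.-1).

Lemma row_complexityE (M : bmat) (i : nat) :
  row_complexity M i = \sum_(j < cols M) run_start M i j.
Proof. by []. Qed.

Lemma entry_BMat_mono (r c : nat) (f g : {ffun 'I_r * 'I_c -> bool}) :
  (forall p, f p -> g p) -> forall a b, entry (BMat f) a b -> entry (BMat g) a b.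
Proof.
by move=> le_fg a b; rewrite /entry /=; case: insub => // i; case: insub => // j /le_fg.
Qed.

Lemma entry_BMat_zero_cover (r c : nat) (f g1 g2 : {ffun 'I_r * 'I_c -> bool}) :
  (forall p, ~~ f p -> ~~ g1 p || ~~ g2 p) ->
  forall a b, ~~ entry (BMat f) a b ->
    ~~ entry (BMat g1) a b || ~~ entry (BMat g2) a b.
Proof.
by move=> cover a b; rewrite /entry /=; case: insub => // i; case: insub => // j /cover.
Qed.

Lemma run_start_sub (M N : bmat) (i j : nat) :
  (forall a b, entry M a b -> entry N a b) ->
  run_start M i j -> ~~ entry N i j -> run_start N i j.
Proof.
move=> le_MN /andP[_ /orP[j0 | Mprev]] N0; rewrite /run_start N0 //=.
  by rewrite j0.
by rewrite le_MN ?orbT.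
Qed.

Lemma run_start_le_add (M M1 M2 : bmat) (i j : nat) :
  (forall a b, entry M a b -> entry M1 a b) ->
  (forall a b, entry M a b -> entry M2 a b) ->
  (~~ entry M i j -> ~~ entry M1 i j || ~~ entry M2 i j) ->
  run_start M i j <= run_start M1 i j + run_start M2 i j.
Proof.
move=> le_M1 le_M2 cover; have [start | //] := boolP (run_start M i j).
have /cover/orP[z1 | z2] : ~~ entry M i j by case/andP: start.
  by rewrite (run_start_sub le_M1 start z1).
by rewrite (run_start_sub le_M2 start z2) addn1.
Qed.

Lemma row_complexity_le_add (r c : nat) (f g1 g2 : {ffun 'I_r * 'I_c -> bool}) (i : nat) :
  (forall p, f p -> g1 p) -> (forall p, f p -> g2 p) ->
  (forall p, ~~ f p -> ~~ g1 p || ~~ g2 p) ->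
  row_complexity (BMat f) i <= row_complexity (BMat g1) i + row_complexity (BMat g2) i.
Proof.
move=> le_fg1 le_fg2 cover; rewrite !row_complexityE -big_split /=.
apply: leq_sum => j _; apply: run_start_le_add.
- exact: entry_BMat_mono.
- exact: entry_BMat_mono.
- exact: entry_BMat_zero_cover.
Qed.

Lemma class_BMat_sub (C : mclass) (r c : nat) (f g : {ffun 'I_r * 'I_c -> bool}) :
  is_class C -> C (BMat g) -> (forall p, f p -> g p) -> C (BMat f).
Proof.
move=> classC Cg le_fg; apply: (classC _ _ Cg); exists id, id.
do 2![split; first by split=> //; split].
move=> i j _ _ fij; exists i, j; rewrite !leqnn.
by split; last exact: entry_BMat_mono le_fg _ _ fij.
Qed.

Lemma critical_sub_class (C D : mclass) (M : bmat) :
  (forall N, D N -> C N) -> D M -> critical C M -> critical D M.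
Proof. by move=> DC DM [_ crit]; split=> // i j Mij /DC; apply: crit. Qed.

Lemma critical_extension (C : mclass) (r c : nat) (f : {ffun 'I_r * 'I_c -> bool}) :
  is_class C -> C (BMat f) ->
  exists g : {ffun 'I_r * 'I_c -> bool}, (forall p, f p -> g p) /\ critical C (BMat g).
Proof.
move=> classC; have [n] := ubnP #|[pred p | ~~ f p]|.
elim: n f => // n IH f lt_zeros Cf.
have [[i [j [fij Cij]]] | no_flip] :=
  classic (exists i j, ~~ f (i, j) /\ C (set_one (M := BMat f) i j)); last first.
  exists f; split=> //; split=> // i j /negbT fij Cij.
  by apply: no_flip; exists i, j.
set f' := [ffun p => (p == (i, j)) || f p].
have le_ff' : forall p, f p -> f' p by move=> p fp; rewrite ffunE fp orbT.
have fewer_zeros : #|[pred p | ~~ f' p]| < #|[pred p | ~~ f p]|.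
  apply/proper_card/properP; split.
    by apply/subsetP => p; rewrite !inE; apply: contra; apply: le_ff'.
  by exists (i, j); rewrite !inE ?ffunE ?eqxx.
have [g [le_f'g crit_g]] := IH f' (leq_trans fewer_zeros lt_zeros) Cij.
by exists g; split=> // p /le_ff'/le_f'g.
Qed.

Lemma critical_inter_zero_cover (C1 C2 : mclass) (r c : nat)
    (f g1 g2 : {ffun 'I_r * 'I_c -> bool}) :
  is_class C1 -> is_class C2 -> critical (class_inter C1 C2) (BMat f) ->
  (forall p, f p -> g1 p) -> C1 (BMat g1) ->
  (forall p, f p -> g2 p) -> C2 (BMat g2) ->
  forall p, ~~ f p -> ~~ g1 p || ~~ g2 p.
Proof.
move=> class1 class2 [_ crit] le_fg1 C1g1 le_fg2 C2g2 [a b] /negbTE fab.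
rewrite -negb_and; apply/negP => /andP[g1ab g2ab]; apply: (crit a b fab).
have le_flip (g : {ffun 'I_r * 'I_c -> bool}) : (forall p, f p -> g p) -> g (a, b) ->
    forall p, [ffun q => (q == (a, b)) || f q] p -> g p.
  by move=> le_fg gab p; rewrite ffunE => /orP[/eqP-> | /le_fg].
split.
  exact: class_BMat_sub class1 C1g1 (le_flip _ le_fg1 g1ab).
exact: class_BMat_sub class2 C2g2 (le_flip _ le_fg2 g2ab).
Qed.

Theorem proposition4p2 (C1 C2 : mclass) :
  is_class C1 -> is_class C2 -> row_bounded C1 -> row_bounded C2 ->
  row_bounded (class_union C1 C2) /\ row_bounded (class_inter C1 C2).
Proof.
move=> class1 class2 [B1 bound1] [B2 bound2]; split.
  exists (maxn B1 B2) => M crit i lt_i; have [[C1M | C2M] _] := crit.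
    apply: leq_trans (leq_maxl _ _); apply: bound1 lt_i.
    by apply: critical_sub_class crit => // N; left.
  apply: leq_trans (leq_maxr _ _); apply: bound2 lt_i.
  by apply: critical_sub_class crit => // N; right.
exists (B1 + B2) => -[r c f] crit i lt_i; have [[C1f C2f] _] := crit.
have [g1 [le_fg1 crit1]] := critical_extension class1 C1f.
have [g2 [le_fg2 crit2]] := critical_extension class2 C2f.
have cover := critical_inter_zero_cover class1 class2 crit le_fg1 crit1.1 le_fg2 crit2.1.
apply: leq_trans (row_complexity_le_add i le_fg1 le_fg2 cover) _.
exact: leq_add (bound1 _ crit1 i lt_i) (bound2 _ crit2 i lt_i).
Qed.
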